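(* Assume the standing conventions of the context and suppose $\mathcal D_{Z,Z'}\neq\emptyset$. (i) If $\Lambda\in\overline{\mathcal S}_Z$ and $\Lambda'_0\in B^+_\Lambda$, then $B^+_\Lambda=\{\Lambda'_0+\Lambda'\mid \Lambda'\in D_Z\}$. (ii) If $\Lambda'\in\overline{\mathcal S}_{Z'}$ and $\Lambda_0\in B^+_{\Lambda'}$, then $B^+_{\Lambda'}=\{\Lambda_0+\Lambda\mid\Lambda\in D_{Z'}\}$.
   Context: A symbol is an array $\Lambda=\binom{a'_1,\ldots,a'_{m_1}}{b'_1,\ldots,b'_{m_2}}$ of two strictly decreasing finite sequences of nonnegative integers (top row, bottom row); its defect is $\mathrm{def}(\Lambda)=m_1-m_2$. Standing assumptions: $Z=\binom{a_1,\ldots,a_{m+1}}{b_1,\ldots,b_m}$ is a special symbol of defect $1$, i.e. $a_1\ge b_1\ge a_2\ge b_2\ge\cdots\ge b_m\ge a_{m+1}$; $Z'=\binom{c_1,\ldots,c_{m'}}{d_1,\ldots,d_{m'}}$ is a special symbol of defect $0$, i.e. $c_1\ge d_1\ge c_2\ge d_2\ge\cdots\ge c_{m'}\ge d_{m'}$; and $m'\in\{m,m+1\}$. For a symbol $Y$, $Y_{\mathrm I}$ is the set of entries of $Y$ occurring in exactly one row. For $M\subset Z_{\mathrm I}$, $\Lambda_M$ is the symbol obtained from $Z$ by moving every entry of $M$ to the other row (rows re-sorted decreasingly); for $N\subset Z'_{\mathrm I}$, $\Lambda_N$ is obtained from $Z'$ in the same way. $\overline{\mathcal S}_Z=\{\Lambda_M: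 M\subset Z_{\mathrm I}\}$, $\overline{\mathcal S}_{Z'}=\{\Lambda_N:N\subset Z'_{\mathrm I}\}$; $\mathcal S_{Z,1}$ (resp. $\mathcal S_{Z',0}$) is the set of elements of $\overline{\mathcal S}_Z$ of defect $1$ (resp. of $\overline{\mathcal S}_{Z'}$ of defect $0$). Sum: $\Lambda_{M_1}+\Lambda_{M_2}:=\Lambda_{(M_1\cup M_2)\smallsetminus(M_1\cap M_2)}$ (for subsets of $Z_{\mathrm I}$, and likewise of $Z'_{\mathrm I}$). Relation $\overline{\mathcal B}^+_{Z,Z'}\subset\overline{\mathcal S}_Z\times\overline{\mathcal S}_{Z'}$: for $\Lambda=\binom{a'_1,\ldots,a'_{m_1}}{b'_1,\ldots,b'_{m_2}}\in\overline{\mathcal S}_Z$ and $\Lambda'=\binom{c'_1,\ldots,c'_{m'_1}}{d'_1,\ldots,d'_{m'_2}}\in\overline{\mathcal S}_{Z'}$, $(\Lambda,\Lambda')\in\overline{\mathcal B}^+_{Z,Z'}$ iff $\mathrm{def}(\Lambda')=1-\mathrm{def}(\Lambda)$ and: if $m'=m$, $a'_i>d'_i\ge a'_{i+1}$ for $1\le i\le m'_2$ and $b'_{i-1}>c'_i\ge b'_i$ for $1\le i\le m'_1$; if $m'=m+1$, $a'_i\ge d'_i>a'_{i+1}$ for $1\le i\le m'_2$ and $b'_{i-1}\ge c'_i>b'_i$ for $1\le i\le m'_1$; here $b'_0=+\infty$ and nonexistent entries $a'_j,b'_j$ beyond the row lengths are $-\infty$. Then $\mathcal D_{Z,Z'}=\overline{\mathcal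 B}^+_{Z,Z'}\cap(\mathcal S_{Z,1}\times\mathcal S_{Z',0})$, $D_Z=\{\Lambda'\mid (Z,\Lambda')\in\mathcal D_{Z,Z'}\}$, $D_{Z'}=\{\Lambda\mid(\Lambda,Z')\in\mathcal D_{Z,Z'}\}$, and for $\Lambda\in\overline{\mathcal S}_Z$, $\Lambda'\in\overline{\mathcal S}_{Z'}$: $B^+_\Lambda=\{\Lambda''\in\overline{\mathcal S}_{Z'}\mid(\Lambda,\Lambda'')\in\overline{\mathcal B}^+_{Z,Z'}\}$ and $B^+_{\Lambda'}=\{\Lambda''\in\overline{\mathcal S}_{Z}\mid(\Lambda'',\Lambda')\in\overline{\mathcal B}^+_{Z,Z'}\}$. *)

From mathcomp Require Import all_boot all_order all_algebra.
Import GRing.Theory.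
Set Implicit Arguments. Unset Strict Implicit. Unset Printing Implicit Defensive.

(* A symbol: (top row, bottom row), each a sequence of naturals which is
   meant to be strictly decreasing. *)
Definition symbol := (seq nat * seq nat)%type.

Definition sdecr (s : seq nat) : bool := sorted (fun x y => y < x) s.

Definition defect (L : symbol) : int := (size L.1)%:Z - (size L.2)%:Z.

Definition inI (Y : symbol) (x : nat) : bool := (x \in Y.1) != (x \in Y.2).

Definition moveS (Y : symbol) (M : seq nat) : symbol :=
  (sort geq ([seq x <- Y.1 | x \notin M] ++ [seq x <- Y.2 | x \in M]),
   sort geq ([seq x <- Y.2 | x \notin M] ++ [seq x <- Y.1 | x \in M])).

Definition inSbar (Y : symbol) (L : symbol) : Prop :=
  exists M : seq nat, all (inI Y) M /\ L = moveS Y M.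

(* symmetric difference of subsets (the sum Lambda_M1 + Lambda_M2 is
   Lambda_(symdiff M1 M2)) *)
Definition symdiff (M1 M2 : seq nat) : seq nat :=
  [seq x <- M1 ++ M2 | (x \in M1) != (x \in M2)].

Inductive ext := NegInf | Fin of nat | PosInf.

Definition ext_le (x y : ext) : bool :=
  match x, y with
  | NegInf, _ => true
  | _, PosInf => true
  | Fin a, Fin b => a <= b
  | _, _ => false
  end.
Definition ext_lt (x y : ext) : bool := ~~ ext_le y x.

(* the (j+1)-th entry of a row (0-based index j), -oo if nonexistent *)
Definition entry (s : seq nat) (j : nat) : ext :=
  if j < size s then Fin (nth 0 s j) else NegInf.

(* b'_{j} in 1-based indexing, i.e. b'_0 = +oo *)
Definition prev_entry (s : seq nat) (j : nat) : ext :=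
  if j is j'.+1 then entry s j' else PosInf.

(* The relation Bbar^+_{Z,Z'}; it depends on Z, Z' via m = #bottom(Z),
   m' = #top(Z'). Indices are 0-based: j stands for i = j+1. *)
Definition Bplus (Z Z' : symbol) (L L' : symbol) : Prop :=
  let m := size Z.2 in let m' := size Z'.1 in
  let a := L.1 in let b := L.2 in let c := L'.1 in let d := L'.2 in
  (defect L' = 1 - defect L)%R /\
  if m' == m then
    (forall j, j < size d ->
       ext_lt (Fin (nth 0 d j)) (entry a j) /\
       ext_le (entry a j.+1) (Fin (nth 0 d j))) /\
    (forall j, j < size c ->
       ext_lt (Fin (nth 0 c j)) (prev_entry b j) /\
       ext_le (entry b j) (Fin (nth 0 c j)))
  else
    (forall j, j < size d ->
       ext_le (Fin (nth 0 d j)) (entry a j) /\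
       ext_lt (entry a j.+1) (Fin (nth 0 d j))) /\
    (forall j, j < size c ->
       ext_le (Fin (nth 0 c j)) (prev_entry b j) /\
       ext_lt (entry b j) (Fin (nth 0 c j))).

Definition Drel (Z Z' : symbol) (L L' : symbol) : Prop :=
  (inSbar Z L /\ (defect L = 1)%R) /\ (inSbar Z' L' /\ (defect L' = 0)%R) /\
  Bplus Z Z' L L'.

Definition special1 (Z : symbol) : Prop :=
  sdecr Z.1 /\ sdecr Z.2 /\ size Z.1 = (size Z.2).+1 /\
  (forall i, i < size Z.2 ->
     nth 0 Z.2 i <= nth 0 Z.1 i /\ nth 0 Z.1 i.+1 <= nth 0 Z.2 i).

Definition special0 (Z' : symbol) : Prop :=
  sdecr Z'.1 /\ sdecr Z'.2 /\ size Z'.1 = size Z'.2 /\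
  (forall i, i < size Z'.2 -> nth 0 Z'.2 i <= nth 0 Z'.1 i) /\
  (forall i, i.+1 < size Z'.1 -> nth 0 Z'.1 i.+1 <= nth 0 Z'.2 i).

From mathcomp Require Import all_boot all_order all_algebra.
From mathcomp Require Import zify.
Set Implicit Arguments. Unset Strict Implicit. Unset Printing Implicit Defensive.

(* Elements of Sbar_Z x Sbar_Z' are pairs (M, N) of subsets of Z_I x Z'_I,
   an F_2-vector space under symmetric difference.  Both parts follow once
   the pairs in Bbar^+ are known to form a linear subspace (Bplus_symdiff):
   then (M, N) and (M, N0) lie in Bbar^+ iff (0, N0 + N) does, i.e. iff
   N0 + N gives an element of D_Z; part (ii) is symmetric.

   Linearity is proved by counting.  Encoding the entries of Lambda by
   2v + [m' <> m] and those of Lambda' by 2v + [m' = m] turns the defining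
   inequalities of Bbar^+ into strict interlacing of encoded rows, which is
   equivalent to inequalities between the numbers of codes above each
   threshold t (Bplus_thresholds).  These counts are additive modulo 2 in
   the moved subset and have row totals independent of it; a downward
   induction on t then shows that valid pairs are closed under sums of three
   (interlaced_xor3), i.e. form an affine subspace.  Finally, since Z and Z'
   are special, a nonempty D_{Z,Z'} puts the origin (Z, Z') itself in
   Bbar^+ (interlaced_base), making the affine subspace linear. *)

Lemma geq_trans : transitive geq.
Proof. by move=> y x z /= le_yx le_zy; apply: leq_trans le_zy le_yx. Qed.

Lemma geq_total : total geq.
Proof. by move=> x y /=; rewrite orbC leq_total. Qed.

Definition up_closed (P : pred nat) := forall x y, x <= y -> P x -> P y.

Lemma up_closed_leq t : up_closed (leq t).
Proof. by move=> x y le_xy le_tx; apply: leq_trans le_tx le_xy. Qed.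

Lemma nth_up_closed (s : seq nat) (P : pred nat) : sorted geq s -> up_closed P ->
  forall i, i < size s -> P (nth 0 s i) = (i < count P s).
Proof.
move=> + upP; elim: s => [|x s IH] sorted_xs i //= lt_i.
have le_sx y : y \in s -> y <= x by move/(allP (order_path_min geq_trans sorted_xs)).
have {}IH := IH (path_sorted sorted_xs).
case Px: (P x) => /=; first by case: i lt_i => [|i] //= lt_i; rewrite IH.
have -> : count P s = 0.
  apply/eqP; rewrite -leqn0 leqNgt -has_count; apply/hasP => -[y s_y Py].
  by rewrite (upP _ _ (le_sx y s_y) Py) in Px.
case: i lt_i => [|i] //= lt_i; apply/negbTE/negP => Psi.
by rewrite (upP _ _ (le_sx _ (mem_nth 0 lt_i)) Psi) in Px.
Qed.

Lemma count_weak_interlace (u w : seq nat) (P : pred nat) :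
  sorted geq u -> sorted geq w -> up_closed P -> size u <= (size w).+1 ->
  (forall j, j < size w -> j < size u /\ nth 0 w j <= nth 0 u j /\
      (j.+1 < size u -> nth 0 u j.+1 <= nth 0 w j)) ->
  count P w <= count P u <= (count P w).+1.
Proof.
move=> sorted_u sorted_w upP size_uw H; apply/andP; split.
  case cw: (count P w) => [|k] //.
  have lt_kw : k < size w by have := count_size P w; lia.
  have [lt_ku [le_wu _]] := H k lt_kw.
  have Pw : P (nth 0 w k) by rewrite nth_up_closed // cw.
  by have := upP _ _ le_wu Pw; rewrite nth_up_closed.
rewrite leqNgt; apply/negP => lt_cu.
set k := count P w in lt_cu.
have lt_k1u : k.+1 < size u by have := count_size P u; lia.
have lt_kw : k < size w by lia.
have Pu : P (nth 0 u k.+1) by rewrite nth_up_closed //; lia.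
have [_ [_ le_uw]] := H k lt_kw.
by have := upP _ _ (le_uw lt_k1u) Pu; rewrite nth_up_closed // ltnn.
Qed.

(* Strict interlacing u_0 > w_0 > u_1 > w_1 > ...: the shape of the
   conditions defining Bbar^+ after encoding the entries (see [enc]). *)
Definition interlace (u w : seq nat) := forall j, j < size w -> j < size u /\
  nth 0 w j < nth 0 u j /\ (j.+1 < size u -> nth 0 u j.+1 < nth 0 w j).

Definition count_interlace (u w : seq nat) := forall t,
  count (leq t) w <= count (leq t) u <= (count (leq t) w).+1.

Lemma interlace_count (u w : seq nat) : sorted geq u -> sorted geq w ->
  size u <= (size w).+1 -> interlace u w -> count_interlace u w.
Proof.
move=> sorted_u sorted_w size_uw H t.
apply: (count_weak_interlace sorted_u sorted_w (@up_closed_leq t) size_uw) => j lt_jw.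
have [lt_ju [lt_wu lt_uw]] := H j lt_jw.
by split=> //; split=> [|/lt_uw/ltnW]; first exact: ltnW.
Qed.

Lemma count_interlaceP (u w : seq nat) : sorted geq u -> sorted geq w ->
  (forall x, x \in u -> x \notin w) -> count_interlace u w -> interlace u w.
Proof.
move=> sorted_u sorted_w disj H j lt_jw.
set x := nth 0 w j; have w_x : x \in w := mem_nth 0 lt_jw.
have := H x; have := nth_up_closed sorted_w (@up_closed_leq x) lt_jw.
rewrite leqnn => /esym lt_jcw /andP[le_cw _].
have lt_jcu : j < count (leq x) u by lia.
have lt_ju : j < size u by have := count_size (leq x) u; lia.
have le_xu : x <= nth 0 u j by rewrite (nth_up_closed sorted_u (@up_closed_leq x)).
split=> //; split.
  rewrite ltn_neqAle le_xu andbT; apply/eqP => eq_xu.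
  by have := disj _ (mem_nth 0 lt_ju); rewrite -eq_xu w_x.
move=> lt_j1u; set y := nth 0 u j.+1; have u_y : y \in u := mem_nth 0 lt_j1u.
have := H y; have := nth_up_closed sorted_u (@up_closed_leq y) lt_j1u.
rewrite leqnn => /esym lt_j1cu /andP[_ le_cuw].
have le_yw : y <= x by rewrite (nth_up_closed sorted_w (@up_closed_leq y)) //; lia.
rewrite ltn_neqAle le_yw andbT; apply/eqP => eq_yx.
by have := disj _ u_y; rewrite eq_yx w_x.
Qed.

(* Entries of symbols in Sbar_Z are encoded by [enc f], entries of symbols
   in Sbar_Z' by [enc' f], where [f] records whether m' = m.  The two codes
   have different parities, so the images are disjoint, and each comparison
   (strict or weak according to f) in the definition of Bbar^+ becomes a
   strict comparison of codes. *)
Definition enc (f : bool) (v : nat) : nat := 2 * v + ~~ f.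
Definition enc' (f : bool) (v : nat) : nat := 2 * v + f.

Lemma enc_homo f : {homo enc f : x y / x <= y}.
Proof. by move=> x y; rewrite /enc; lia. Qed.

Lemma enc'_homo f : {homo enc' f : x y / x <= y}.
Proof. by move=> x y; rewrite /enc'; lia. Qed.

Lemma enc_neq f x y : enc f x != enc' f y.
Proof. by rewrite /enc /enc'; case: f; lia. Qed.

Lemma enc_disjoint f s s' x : x \in map (enc f) s -> x \notin map (enc' f) s'.
Proof. by case/mapP=> v _ ->; apply/mapP => -[w _ /eqP]; rewrite (negbTE (enc_neq _ _ _)). Qed.

Lemma enc_le f x : enc f x <= (2 * x).+1.
Proof. by rewrite /enc; case: f; lia. Qed.

Lemma enc'_le f x : enc' f x <= (2 * x).+1.
Proof. by rewrite /enc'; case: f; lia. Qed.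

(* No threshold [t] is hit by both codes: it has the parity of only one. *)
Lemma enc_avoid f t : (forall v, enc f v != t) \/ (forall v, enc' f v != t).
Proof.
rewrite /enc /enc'; case: (boolP (odd t == f)) => [/eqP odd_t | odd_t].
  by left=> v; apply/eqP => eq_vt; move: odd_t; rewrite -{}eq_vt; case: f; lia.
by right=> v; apply/eqP => eq_vt; move: odd_t; rewrite -{}eq_vt; case: f; lia.
Qed.

Lemma sorted_geq_map g s : {homo g : x y / x <= y} ->
  sorted geq s -> sorted geq (map g s).
Proof. by move=> g_homo; apply: homo_sorted => x y; apply: g_homo. Qed.

Lemma sorted_code g s : {homo g : x y / x <= y} -> sorted geq (map g (sort geq s)).
Proof. by move=> g_homo; apply: sorted_geq_map (sort_sorted geq_total s). Qed.

Lemma up_closed_preim g t : {homo g : x y / x <= y} -> up_closed (fun v => t <= g v).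
Proof. by move=> g_homo x y /g_homo le_g le_t; apply: leq_trans le_t le_g. Qed.

Definition ext_strict (f : bool) : ext -> ext -> bool := if f then ext_lt else ext_le.
Definition ext_weak (f : bool) : ext -> ext -> bool := if f then ext_le else ext_lt.

Lemma ext_strict_entry f x s j :
  ext_strict f (Fin x) (entry s j) = (j < size s) && (enc' f x < enc f (nth 0 s j)).
Proof.
by rewrite /ext_strict /ext_lt /entry /enc /enc'; case: f; case: ifP => _ //=; lia.
Qed.

Lemma ext_weak_entry f s j x :
  ext_weak f (entry s j) (Fin x) = (j < size s) ==> (enc f (nth 0 s j) < enc' f x).
Proof.
by rewrite /ext_weak /ext_lt /entry /enc /enc'; case: f; case: ifP => _ //=; lia.
Qed.

Lemma interlace_top f (a d : seq nat) :
  (forall j, j < size d -> ext_strict f (Fin (nth 0 d j)) (entry a j) /\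
                           ext_weak f (entry a j.+1) (Fin (nth 0 d j))) <->
  interlace (map (enc f) a) (map (enc' f) d).
Proof.
rewrite /interlace !size_map; split=> H j lt_jd; have := H j lt_jd.
  rewrite ext_strict_entry ext_weak_entry => -[/andP[lt_ja lt_da] /implyP lt_ad].
  rewrite (nth_map 0 0 _ lt_ja) (nth_map 0 0 _ lt_jd); do 2!split=> //.
  by move=> lt_j1a; rewrite (nth_map 0) //; apply: lt_ad.
move=> -[lt_ja]; rewrite (nth_map 0 0 _ lt_ja) (nth_map 0 0 _ lt_jd) => -[lt_da lt_ad].
rewrite ext_strict_entry ext_weak_entry lt_ja lt_da; split=> //.
by apply/implyP => lt_j1a; have := lt_ad lt_j1a; rewrite (nth_map 0).
Qed.

Lemma interlace_bottom f (b c : seq nat) : size b <= size c <= (size b).+1 ->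
  (forall j, j < size c -> ext_strict f (Fin (nth 0 c j)) (prev_entry b j) /\
                           ext_weak f (entry b j) (Fin (nth 0 c j))) <->
  interlace (map (enc' f) c) (map (enc f) b).
Proof.
move=> /andP[le_bc le_cb]; rewrite /interlace !size_map; split=> H j lt_j.
  have lt_jc : j < size c by lia.
  rewrite (nth_map 0 0 _ lt_j) (nth_map 0 0 _ lt_jc); split=> //; split.
    by have := H j lt_jc; rewrite ext_weak_entry lt_j => -[_].
  move=> lt_j1c; rewrite (nth_map 0) //.
  by have := H j.+1 lt_j1c; rewrite /= ext_strict_entry => -[/andP[]].
split.
  case: j lt_j => [|j] lt_j1c; first by rewrite /ext_strict; case: (f).
  have lt_jb : j < size b by lia.
  have [_ [_ lt_cb]] := H j lt_jb; move: (lt_cb lt_j1c).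
  by rewrite /= ext_strict_entry lt_jb (nth_map 0 0 _ lt_j1c) (nth_map 0 0 _ lt_jb).
rewrite ext_weak_entry; apply/implyP => lt_jb.
by have [_ [+ _]] := H j lt_jb; rewrite (nth_map 0 0 _ lt_j) (nth_map 0 0 _ lt_jb).
Qed.

Lemma BplusE Z Z' L L' : Bplus Z Z' L L' <->
  (defect L' = 1 - defect L)%R /\
  (forall j, j < size L'.2 ->
     ext_strict (size Z'.1 == size Z.2) (Fin (nth 0 L'.2 j)) (entry L.1 j) /\
     ext_weak (size Z'.1 == size Z.2) (entry L.1 j.+1) (Fin (nth 0 L'.2 j))) /\
  (forall j, j < size L'.1 ->
     ext_strict (size Z'.1 == size Z.2) (Fin (nth 0 L'.1 j)) (prev_entry L.2 j) /\
     ext_weak (size Z'.1 == size Z.2) (entry L.2 j) (Fin (nth 0 L'.1 j))).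
Proof. by rewrite /Bplus /ext_strict /ext_weak; case: (size Z'.1 == size Z.2). Qed.

(* The
   unsorted new top row of a symbol (s1, s2) is [moved_row s1 s2 p], its new
   bottom row is [moved_row s2 s1 p]; [moveS Y M] is [moveP] for membership
   in [M], and predicates make sums of subsets easy to express. *)
Definition moved_row (s1 s2 : seq nat) (p : pred nat) : seq nat :=
  [seq x <- s1 | ~~ p x] ++ [seq x <- s2 | p x].

Definition moveP (Y : symbol) (p : pred nat) : symbol :=
  (sort geq (moved_row Y.1 Y.2 p), sort geq (moved_row Y.2 Y.1 p)).

Lemma moveSE Y M : moveS Y M = moveP Y (fun x => x \in M).
Proof. by []. Qed.

Lemma moveP_ext Y p q : p =1 q -> moveP Y p = moveP Y q.
Proof.
move=> eq_pq; rewrite /moveP /moved_row !(eq_filter eq_pq).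
by rewrite !(@eq_filter _ (fun x => ~~ p x) (fun x => ~~ q x)) // => x; rewrite eq_pq.
Qed.

Lemma moved_row0 s1 s2 : moved_row s1 s2 pred0 = s1.
Proof. by rewrite /moved_row filter_pred0 cats0 -[RHS]filter_predT. Qed.

Lemma moveP0 Y : sorted geq Y.1 -> sorted geq Y.2 -> moveP Y pred0 = Y.
Proof. by case: Y => y1 y2 /= ? ?; rewrite /moveP !moved_row0 /= !(sorted_sort geq_trans). Qed.

Definition count_above (g : nat -> nat) (t : nat) (s : seq nat) : nat :=
  count (fun v => t <= g v) s.

Lemma count_above0 g s : count_above g 0 s = size s.
Proof. exact: count_predT. Qed.

Lemma count_above_sort g t s : count (leq t) (map g (sort geq s)) = count_above g t s.
Proof. by rewrite count_map; apply/permP; rewrite perm_sort. Qed.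

Lemma count_above_mono g t s : count_above g t.+1 s <= count_above g t s.
Proof. by apply: sub_count => v /= /ltnW. Qed.

Lemma count_above_avoid g t s : (forall v, g v != t) ->
  count_above g t s = count_above g t.+1 s.
Proof. by move=> avoid; apply: eq_count => v /=; rewrite leq_eqVlt eq_sym (negbTE (avoid v)). Qed.

Lemma count_filter_split (P p : pred nat) s :
  count P [seq x <- s | ~~ p x] + count P [seq x <- s | p x] = count P s.
Proof. by elim: s => //= x s IH; case: (p x) => /=; case: (P x) => /=; lia. Qed.

Lemma count_above_moved g t s1 s2 p :
  count_above g t (moved_row s1 s2 p) + count_above g t (moved_row s2 s1 p) =
  count_above g t s1 + count_above g t s2.
Proof.
rewrite /count_above !count_cat.
have := count_filter_split (fun v => t <= g v) p s1.
have := count_filter_split (fun v => t <= g v) p s2; lia.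
Qed.

Definition interlaced_counts (a b c d : nat) := d <= a <= d.+1 /\ b <= c <= b.+1.

Definition interlaced_at (f : bool) (Z Z' : symbol) (p n : pred nat) (t : nat) :=
  interlaced_counts
    (count_above (enc f) t (moved_row Z.1 Z.2 p))
    (count_above (enc f) t (moved_row Z.2 Z.1 p))
    (count_above (enc' f) t (moved_row Z'.1 Z'.2 n))
    (count_above (enc' f) t (moved_row Z'.2 Z'.1 n)).

Section ThresholdForm.
Variables (Z Z' : symbol) (f : bool).
Hypothesis f_def : f = (size Z'.1 == size Z.2).
Hypothesis size_balance : size Z.1 + size Z.2 + ~~ f = size Z'.1 + size Z'.2 + f.

(* Bbar^+ between moved symbols holds iff the counting form holds at every
   threshold; the defect condition is the counting form at threshold 0. *)
Lemma Bplus_thresholds p n :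
  Bplus Z Z' (moveP Z p) (moveP Z' n) <-> forall t, interlaced_at f Z Z' p n t.
Proof.
rewrite BplusE -f_def /defect /interlaced_at /=.
set a := moved_row Z.1 Z.2 p; set b := moved_row Z.2 Z.1 p.
set c := moved_row Z'.1 Z'.2 n; set d := moved_row Z'.2 Z'.1 n.
have := count_above_moved (enc f) 0 Z.1 Z.2 p.
have := count_above_moved (enc' f) 0 Z'.1 Z'.2 n.
rewrite !count_above0 -/a -/b -/c -/d => size_cd size_ab.
have sorted_a := sorted_code a (@enc_homo f); have sorted_b := sorted_code b (@enc_homo f).
have sorted_c := sorted_code c (@enc'_homo f); have sorted_d := sorted_code d (@enc'_homo f).
split=> [[def_eq [top bottom]] t | thresholds].
  rewrite !size_sort in def_eq.
  have size_ad : size a = size d + f by move: def_eq; case: (f) size_balance; lia.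
  have size_cb : size c = size b + ~~ f by move: def_eq; case: (f) size_balance; lia.
  have top_counts : count_interlace (map (enc f) (sort geq a)) (map (enc' f) (sort geq d)).
    apply: interlace_count => //; first by rewrite !size_map !size_sort size_ad; case: (f); lia.
    exact/interlace_top.
  have bottom_counts : count_interlace (map (enc' f) (sort geq c)) (map (enc f) (sort geq b)).
    apply: interlace_count => //; first by rewrite !size_map !size_sort size_cb; case: (~~ f); lia.
    by apply/interlace_bottom => //; rewrite !size_sort size_cb; case: (~~ f); lia.
  by split; [move: (top_counts t) | move: (bottom_counts t)]; rewrite !count_above_sort.
have [] := thresholds 0; rewrite !count_above0 => size_ad size_cb.
split; first by rewrite !size_sort; move: size_ad size_cb; case: (f) size_balance; lia.
split.
  apply/interlace_top/count_interlaceP => // [x|t]; first exact: enc_disjoint.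
  by rewrite !count_above_sort; case: (thresholds t).
apply/interlace_bottom; first by rewrite !size_sort.
apply: count_interlaceP => // [x|t]; first by apply: contraL; apply: enc_disjoint.
by rewrite !count_above_sort; case: (thresholds t).
Qed.

End ThresholdForm.

(* The counts (a, b, c, d) at
   threshold t of the new pair are interlaced if: they are at t.+1
   (a', b', c', d'); the counts of three interlaced pairs have the same row
   totals; passing from t.+1 to t changes only the counts of one family of
   codes; and parities add up. *)
Lemma interlaced_counts_step (a b c d a' b' c' d' a1 b1 c1 d1 a2 b2 c2 d2
    a3 b3 c3 d3 : nat) :
  interlaced_counts a' b' c' d' -> interlaced_counts a1 b1 c1 d1 ->
  interlaced_counts a2 b2 c2 d2 -> interlaced_counts a3 b3 c3 d3 ->
  a1 + b1 = a + b -> a2 + b2 = a + b -> a3 + b3 = a + b ->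
  c1 + d1 = c + d -> c2 + d2 = c + d -> c3 + d3 = c + d ->
  a' <= a -> b' <= b -> c' <= c -> d' <= d ->
  (a = a' /\ b = b') \/ (c = c' /\ d = d') ->
  ~~ odd (a + a1 + a2 + a3) -> ~~ odd (d + d1 + d2 + d3) ->
  interlaced_counts a b c d.
Proof. by rewrite /interlaced_counts; lia. Qed.

Definition xor3 (p1 p2 p3 : pred nat) : pred nat := fun x => p1 x (+) p2 x (+) p3 x.

Lemma count_filter_xor3 (Q q1 q2 q3 : pred nat) s :
  ~~ odd (count Q [seq x <- s | xor3 q1 q2 q3 x] + count Q [seq x <- s | q1 x] +
          count Q [seq x <- s | q2 x] + count Q [seq x <- s | q3 x]).
Proof.
elim: s => //= x s IH; rewrite /xor3 in IH *.
by case: (q1 x); case: (q2 x); case: (q3 x) => /=; case: (Q x) => /=; lia.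
Qed.

Lemma count_above_xor3 g t s1 s2 p1 p2 p3 :
  ~~ odd (count_above g t (moved_row s1 s2 (xor3 p1 p2 p3)) +
          count_above g t (moved_row s1 s2 p1) + count_above g t (moved_row s1 s2 p2) +
          count_above g t (moved_row s1 s2 p3)).
Proof.
rewrite /count_above /moved_row !count_cat.
have := count_filter_xor3 (fun v => t <= g v) p1 p2 p3 s2.
have := count_filter_xor3 (fun v => t <= g v) (predC p1) (predC p2) (predC p3) s1.
have -> : [seq x <- s1 | xor3 (predC p1) (predC p2) (predC p3) x] =
          [seq x <- s1 | ~~ xor3 p1 p2 p3 x].
  by apply: eq_filter => x; rewrite /xor3 /=; case: (p1 x); case: (p2 x); case: (p3 x).
by rewrite /=; lia.
Qed.

Lemma leq_sumn (v : nat) (s : seq nat) : v \in s -> v <= sumn s.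
Proof. by elim: s => //= x s IH; rewrite in_cons => /predU1P[->|/IH]; lia. Qed.

Lemma count_above_large g t s1 s2 p : (forall v, g v <= (2 * v).+1) ->
  (2 * (sumn s1 + sumn s2)).+1 < t -> count_above g t (moved_row s1 s2 p) = 0.
Proof.
move=> g_le lt_t.
have small (v : nat) : v \in s1 ++ s2 -> g v < t.
  by move/leq_sumn; rewrite sumn_cat; have := g_le v; lia.
apply/eqP; rewrite -leqn0 leqNgt -has_count; apply/hasP => -[v].
rewrite mem_cat !mem_filter => v_in /=; rewrite leqNgt small //.
by rewrite mem_cat; case/orP: v_in => /andP[_ ->]; rewrite ?orbT.
Qed.

(* Closure under sums of three: valid pairs form an affine subspace over F_2.
   Proved by downward induction on the threshold, starting above all codes. *)
Lemma interlaced_xor3 f Z Z' (p1 p2 p3 n1 n2 n3 : pred nat) :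
  (forall t, interlaced_at f Z Z' p1 n1 t) -> (forall t, interlaced_at f Z Z' p2 n2 t) ->
  (forall t, interlaced_at f Z Z' p3 n3 t) ->
  forall t, interlaced_at f Z Z' (xor3 p1 p2 p3) (xor3 n1 n2 n3) t.
Proof.
move=> I1 I2 I3.
pose S := sumn Z.1 + sumn Z.2 + sumn Z'.1 + sumn Z'.2.
suff downward k t : (2 * S).+2 <= t + k -> interlaced_at f Z Z' (xor3 p1 p2 p3) (xor3 n1 n2 n3) t.
  by move=> t; apply: (downward (2 * S).+2); lia.
elim: k t => [|k IH] t le_T.
  have vanish g s1 s2 q : (forall v, g v <= (2 * v).+1) -> sumn s1 + sumn s2 <= S ->
      count_above g t (moved_row s1 s2 q) = 0.
    by move=> g_le le_S; apply: count_above_large g_le _; lia.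
  rewrite /interlaced_at /interlaced_counts !(vanish _ _ _ _ (@enc_le f));
    rewrite ?(vanish _ _ _ _ (@enc'_le f)) /S; lia.
rewrite /interlaced_at; apply: interlaced_counts_step (IH t.+1 _) (I1 t) (I2 t) (I3 t) _ _ _ _ _ _
  (count_above_mono _ _ _) (count_above_mono _ _ _) (count_above_mono _ _ _)
  (count_above_mono _ _ _) _ (count_above_xor3 _ _ _ _ _ _ _) (count_above_xor3 _ _ _ _ _ _ _).
- by rewrite addSnnS.
- 1-6: by rewrite !count_above_moved.
by case: (enc_avoid f t) => avoid; [left | right]; rewrite !(count_above_avoid _ avoid).
Qed.

Lemma sorted_sdecr s : sdecr s -> sorted geq s.
Proof. by apply: sub_sorted => x y /= /ltnW. Qed.

(* For special symbols the rows of Z interlace weakly, as do those of Z'.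
   Hence the counting form holds for the pair (Z, Z') itself as soon as it
   holds for some pair, which at each threshold bounds the difference of the
   row totals of Z and Z' by 1. *)
Lemma interlaced_base f Z Z' p n : special1 Z -> special0 Z' ->
  (forall t, interlaced_at f Z Z' p n t) -> forall t, interlaced_at f Z Z' pred0 pred0 t.
Proof.
move=> [sorted1 [sorted2 [size_Z le_Z]]] [sorted1' [sorted2' [size_Z' [le_Z' le_Z'']]]].
move=> valid t; have := valid t; rewrite /interlaced_at /interlaced_counts !moved_row0.
have := count_above_moved (enc f) t Z.1 Z.2 p.
have := count_above_moved (enc' f) t Z'.1 Z'.2 n.
have : count_above (enc f) t Z.2 <= count_above (enc f) t Z.1 <=
       (count_above (enc f) t Z.2).+1.
  apply: count_weak_interlace; rewrite ?size_Z ?sorted_sdecr //.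
    exact: up_closed_preim (@enc_homo f).
  move=> j lt_j; have [le1 le2] := le_Z j lt_j.
  by split; [apply: leqW | split=> // _].
have : count_above (enc' f) t Z'.2 <= count_above (enc' f) t Z'.1 <=
       (count_above (enc' f) t Z'.2).+1.
  apply: count_weak_interlace; rewrite ?size_Z' ?sorted_sdecr //.
    exact: up_closed_preim (@enc'_homo f).
  move=> j lt_j; split=> //; split=> [|lt_j1]; first exact: le_Z'.
  by apply: le_Z''; rewrite size_Z'.
rewrite /count_above; lia.
Qed.

Lemma mem_symdiff (M1 M2 : seq nat) x : (x \in symdiff M1 M2) = (x \in M1) (+) (x \in M2).
Proof. by rewrite mem_filter mem_cat; case: (x \in M1); case: (x \in M2). Qed.

Lemma all_symdiff (P : pred nat) M1 M2 : all P M1 -> all P M2 -> all P (symdiff M1 M2).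
Proof.
move=> /allP P1 /allP P2; apply/allP => x; rewrite mem_filter mem_cat.
by case/andP=> _ /orP[/P1|/P2].
Qed.

Lemma moveS_mem Y M1 M2 : M1 =i M2 -> moveS Y M1 = moveS Y M2.
Proof. by move=> eq_M; rewrite !moveSE; apply: moveP_ext => x; rewrite eq_M. Qed.

Lemma moveS_nil Y : sorted geq Y.1 -> sorted geq Y.2 -> moveS Y [::] = Y.
Proof. by move=> ? ?; rewrite moveSE (@moveP_ext _ _ pred0) ?moveP0. Qed.

Lemma inSbar_moveS Y M : all (inI Y) M -> inSbar Y (moveS Y M).
Proof. by exists M. Qed.

Section Proposition.
Variables Z Z' : symbol.
Hypothesis special_Z : special1 Z.
Hypothesis special_Z' : special0 Z'.
Hypothesis size_Z' : size Z'.1 = size Z.2 \/ size Z'.1 = (size Z.2).+1.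

Lemma moveZ_nil : moveS Z [::] = Z.
Proof. by case: special_Z => [? [? _]]; apply: moveS_nil; apply: sorted_sdecr. Qed.

Lemma moveZ'_nil : moveS Z' [::] = Z'.
Proof. by case: special_Z' => [? [? _]]; apply: moveS_nil; apply: sorted_sdecr. Qed.

Lemma size_balance : size Z.1 + size Z.2 + ~~ (size Z'.1 == size Z.2) =
  size Z'.1 + size Z'.2 + (size Z'.1 == size Z.2).
Proof.
case: special_Z special_Z' => [_ [_ [-> _]]] [_ [_ [<- _]]].
by case: size_Z' => ->; rewrite ?eqxx ?(gtn_eqF (ltnSn _)) /=; lia.
Qed.

Lemma Bplus_moveP p n : Bplus Z Z' (moveP Z p) (moveP Z' n) <->
  forall t, interlaced_at (size Z'.1 == size Z.2) Z Z' p n t.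
Proof. exact: Bplus_thresholds size_balance p n. Qed.

Lemma Bplus_base : (exists L L', Drel Z Z' L L') -> Bplus Z Z' Z Z'.
Proof.
move=> [_ [_ [[[M [_ ->]] _] [[[N [_ ->]] _] B]]]].
have := (Bplus_moveP pred0 pred0).2 (interlaced_base special_Z special_Z' ((Bplus_moveP _ _).1 B)).
case: special_Z special_Z' => [? [? _]] [? [? _]].
by rewrite !moveP0 ?sorted_sdecr.
Qed.

Lemma Bplus_symdiff M1 N1 M2 N2 : Bplus Z Z' Z Z' ->
  Bplus Z Z' (moveS Z M1) (moveS Z' N1) -> Bplus Z Z' (moveS Z M2) (moveS Z' N2) ->
  Bplus Z Z' (moveS Z (symdiff M1 M2)) (moveS Z' (symdiff N1 N2)).
Proof.
move=> base B1 B2.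
have mem_symdiff_xor3 (K1 K2 : seq nat) :
    (fun x => x \in symdiff K1 K2) =1 xor3 (fun x => x \in K1) (fun x => x \in K2) pred0.
  by move=> x; rewrite /xor3 mem_symdiff addbF.
rewrite !moveSE !(moveP_ext _ (mem_symdiff_xor3 _ _)); apply/Bplus_moveP.
apply: interlaced_xor3; apply/Bplus_moveP => //.
by case: special_Z special_Z' => [? [? _]] [? [? _]]; rewrite !moveP0 ?sorted_sdecr.
Qed.

Lemma defect_Z : defect Z = 1%R.
Proof. by case: special_Z => [_ [_ [size_Z _]]]; rewrite /defect size_Z; lia. Qed.

Lemma defect_Z' : defect Z' = 0%R.
Proof. by case: special_Z' => [_ [_ [size_rows _]]]; rewrite /defect size_rows; lia. Qed.

Lemma Drel_intro M N : all (inI Z) M -> all (inI Z') N ->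
  Bplus Z Z' (moveS Z M) (moveS Z' N) -> defect (moveS Z M) = 1%R ->
  Drel Z Z' (moveS Z M) (moveS Z' N).
Proof.
move=> inM inN B def1; have [def_eq _] := B.
split; first by split=> //; apply: inSbar_moveS.
split=> //; split; first exact: inSbar_moveS.
by rewrite def_eq def1; lia.
Qed.

Lemma coset_top M N0 : Bplus Z Z' Z Z' -> all (inI Z') N0 ->
  Bplus Z Z' (moveS Z M) (moveS Z' N0) -> forall L'',
  (inSbar Z' L'' /\ Bplus Z Z' (moveS Z M) L'') <->
  (exists N1, all (inI Z') N1 /\ Drel Z Z' Z (moveS Z' N1) /\
              L'' = moveS Z' (symdiff N0 N1)).
Proof.
move=> base inN0 B L''; split=> [[[N [inN ->]] BN] | [N1 [inN1 [[_ [_ B1]] ->]]]].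
  have inN1 := all_symdiff inN0 inN.
  have B1 : Bplus Z Z' (moveS Z [::]) (moveS Z' (symdiff N0 N)).
    rewrite -(@moveS_mem Z (symdiff M M)); first exact: Bplus_symdiff base B BN.
    by move=> x; rewrite mem_symdiff addbb.
  exists (symdiff N0 N); split=> //; split.
    have := @Drel_intro [::] _ isT inN1 B1.
    by rewrite moveZ_nil; apply; exact: defect_Z.
  by apply: moveS_mem => x; rewrite !mem_symdiff addbA addbb.
split; first by apply: inSbar_moveS; apply: all_symdiff.
have B1' : Bplus Z Z' (moveS Z [::]) (moveS Z' N1) by rewrite moveZ_nil.
rewrite -(@moveS_mem Z (symdiff M [::]) M); first exact: Bplus_symdiff base B B1'.
by move=> x; rewrite mem_symdiff addbF.
Qed.

Lemma coset_bottom N M0 : Bplus Z Z' Z Z' -> all (inI Z) M0 ->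
  Bplus Z Z' (moveS Z M0) (moveS Z' N) -> forall L'',
  (inSbar Z L'' /\ Bplus Z Z' L'' (moveS Z' N)) <->
  (exists M1, all (inI Z) M1 /\ Drel Z Z' (moveS Z M1) Z' /\
              L'' = moveS Z (symdiff M0 M1)).
Proof.
move=> base inM0 B L''; split=> [[[M [inM ->]] BM] | [M1 [inM1 [[_ [_ B1]] ->]]]].
  have inM1 := all_symdiff inM0 inM.
  have B1 : Bplus Z Z' (moveS Z (symdiff M0 M)) (moveS Z' [::]).
    rewrite -(@moveS_mem Z' (symdiff N N)); first exact: Bplus_symdiff base B BM.
    by move=> x; rewrite mem_symdiff addbb.
  exists (symdiff M0 M); split=> //; split.
    have := @Drel_intro _ [::] inM1 isT B1; rewrite moveZ'_nil; apply.
    by have [+ _] := B1; rewrite moveZ'_nil defect_Z'; lia.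
  by apply: moveS_mem => x; rewrite !mem_symdiff addbA addbb.
split; first by apply: inSbar_moveS; apply: all_symdiff.
have B1' : Bplus Z Z' (moveS Z M1) (moveS Z' [::]) by rewrite moveZ'_nil.
rewrite -(@moveS_mem Z' (symdiff N [::]) N); first exact: Bplus_symdiff base B B1'.
by move=> x; rewrite mem_symdiff addbF.
Qed.

End Proposition.

Theorem proposition0810 (Z Z' : symbol) :
  special1 Z -> special0 Z' ->
  (size Z'.1 = size Z.2 \/ size Z'.1 = (size Z.2).+1) ->
  (exists L L', Drel Z Z' L L') ->
  (* (i) *)
  (forall (M N0 : seq nat), all (inI Z) M -> all (inI Z') N0 ->
     Bplus Z Z' (moveS Z M) (moveS Z' N0) ->
     forall L'' : symbol,
       (inSbar Z' L'' /\ Bplus Z Z' (moveS Z M) L'') <->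
       (exists N1 : seq nat, all (inI Z') N1 /\ Drel Z Z' Z (moveS Z' N1) /\
          L'' = moveS Z' (symdiff N0 N1))) /\
  (* (ii) *)
  (forall (N M0 : seq nat), all (inI Z') N -> all (inI Z) M0 ->
     Bplus Z Z' (moveS Z M0) (moveS Z' N) ->
     forall L'' : symbol,
       (inSbar Z L'' /\ Bplus Z Z' L'' (moveS Z' N)) <->
       (exists M1 : seq nat, all (inI Z) M1 /\ Drel Z Z' (moveS Z M1) Z' /\
          L'' = moveS Z (symdiff M0 M1))).
Proof.
move=> special_Z special_Z' size_Z' nonempty_D.
have base := Bplus_base special_Z special_Z' size_Z' nonempty_D.
split=> [M N0 _ inN0 | N M0 _ inM0].
  exact: coset_top special_Z special_Z' size_Z' M N0 base inN0.
exact: coset_bottom special_Z special_Z' size_Z' N M0 base inM0.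
Qed.
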